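(* Let $U$ be the $\mathrm{mdG}(q)$ solution of $\dot u=f(u,t)$, $U(0^-)=u_0$, with residual $R_i(U,t)=\dot U_i(t)-f_i(U(t),t)$, and let $\tilde R$ be the local $L^2$-projection of $R$ onto the trial space, i.e. $\tilde R_i(U,\cdot)|_{I_{ij}}$ is the $L^2(I_{ij})$-orthogonal projection of $R_i(U,\cdot)|_{I_{ij}}$ onto the polynomials of degree $\le q_{ij}$ on $I_{ij}$, $j=1,\dots,M_i$, $i=1,\dots,N$. Then every $\tilde R_i(U,\cdot)|_{I_{ij}}$ is a (possibly zero) scalar multiple of the Radau polynomial of degree $q_{ij}$ on $I_{ij}$, i.e. of $t\mapsto Q_{q_{ij}}\big(2(t-t_{i,j-1})/k_{ij}-1\big)$.
   Context: $f$ is bounded and Lipschitz in $u$. For each component $i$: partition $0=t_{i0}<\dots<t_{iM_i}=T$, $I_{ij}=(t_{i,j-1},t_{ij}]$, $k_{ij}=t_{ij}-t_{i,j-1}$, degrees $q_{ij}\ge1$. The $\mathrm{mdG}(q)$ solution $U$: $U_i|_{I_{ij}}$ a polynomial of degree $\le q_{ij}$, $U_i(0^-)=u_i(0)$, and $[U_i]_{i,j-1}v(t_{i,j-1}^+)+\int_{I_{ij}}\dot U_iv\,dt=\int_{I_{ij}}f_i(U,t)v\,dt$ for all polynomials $v$ of degree $\le q_{ij}$ on $I_{ij}$, with $[U_i]_{ij}=U_i(t_{ij}^+)-U_i(t_{ij}^-)$ (exact integration). With $P_q$ the Legendre polynomial of degree $q$ on $[-1,1]$, the Radau polynomial is $Q_q(x)=(P_q(x)+P_{q+1}(x))/(x+1)$.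 *)

From HB Require Import structures.
From mathcomp Require Import all_boot all_order all_algebra.
From mathcomp Require Import all_classical all_reals all_analysis.
Set Implicit Arguments. Unset Strict Implicit. Unset Printing Implicit Defensive.
Import Order.TTheory GRing.Theory Num.Theory.
Import numFieldNormedType.Exports.
Local Open Scope classical_set_scope.
Local Open Scope ring_scope.

(* Legendre polynomials on [-1,1], via Bonnet's recursion
   P_0 = 1, P_1 = X, (n+2) P_{n+2} = (2n+3) X P_{n+1} - (n+1) P_n. *)
Fixpoint legendre_pair (R : fieldType) (n : nat) : {poly R} * {poly R} :=
  match n with
  | 0 => (1, 'X)
  | n'.+1 =>
      let: (p, p1) := legendre_pair R n' in
      (p1, (n'.+2)%:R^-1 *:
             ((n'.*2.+3)%:R *: ('X * p1) - (n'.+1)%:R *: p))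
  end.

Definition legendre (R : fieldType) (n : nat) : {poly R} := (legendre_pair R n).1.

(* Radau polynomial Q_q(x) = (P_q(x) + P_{q+1}(x)) / (x + 1)
   (exact polynomial division since P_q(-1) + P_{q+1}(-1) = 0). *)
Definition radau (R : fieldType) (q : nat) : {poly R} :=
  (legendre R q + legendre R q.+1) %/ ('X + 1).

Definition radau_on (R : fieldType) (q : nat) (a b : R) (t : R) : R :=
  (radau R q).[2 * (t - a) / (b - a) - 1].

Definition intI (R : realType) (a b : R) (g : R -> R) : R :=
  \int[@lebesgue_measure R]_(x in `]a, b]) g x.

From HB Require Import structures.
From mathcomp Require Import all_boot all_order all_algebra.
From mathcomp Require Import all_classical all_reals all_analysis.
From mathcomp Require Import ring lra zify.
Set Implicit Arguments. Unset Strict Implicit. Unset Printing Implicit Defensive.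
Import Order.TTheory GRing.Theory Num.Theory.
Import numFieldNormedType.Exports.
Local Open Scope classical_set_scope.
Local Open Scope ring_scope.

(* Testing the mdG(q) equation on I = (a, b] with v = (t - a) w, deg w < q, kills
   the jump term, so the projection p of the residual is L^2(I)-orthogonal to all
   such v.  Polynomials of degree <= q with this property form a line: one that
   vanishes at a is itself of the form (t - a) w and hence orthogonal to itself.
   The Radau polynomial, transported to I, lies on that line, because
   Q_q(x) (x + 1) = P_q(x) + P_{q+1}(x) is orthogonal to all polynomials of degree
   < q; this orthogonality of Legendre polynomials comes from the self-adjointness
   of their differential operator ((1 - x^2) P_n')' = - n (n + 1) P_n, derived from
   Bonnet's recursion. *)
Section PolyIntegral.
Variable R : numFieldType.
Implicit Types (a b c : R) (p r : {poly R}).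

Definition antideriv p : {poly R} :=
  \poly_(i < (size p).+1) (if i is k.+1 then p`_k / k.+1%:R else 0).

Lemma coef_antideriv p i :
  (antideriv p)`_i = if i is k.+1 then p`_k / k.+1%:R else 0.
Proof.
rewrite coef_poly; case: i => [|k]; first by case: ltnP.
by case: ltnP => // /(nth_default 0) ->; rewrite mul0r.
Qed.

Lemma deriv_antideriv p : (antideriv p)^`() = p.
Proof.
apply/polyP => i; rewrite coef_deriv coef_antideriv -(mulr_natr (p`_i / _)).
by rewrite mulfVK ?pnatr_eq0.
Qed.

Lemma antideriv_deriv p : antideriv p^`() = p - (p`_0)%:P.
Proof.
apply/polyP => -[|k]; rewrite coef_antideriv coefB coefC ?subrr //.
by rewrite coef_deriv subr0 -(mulr_natr p`_k.+1) mulfK ?pnatr_eq0.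
Qed.

Definition pint a b p := (antideriv p).[b] - (antideriv p).[a].

Lemma pint_deriv a b p : pint a b p^`() = p.[b] - p.[a].
Proof. by rewrite /pint antideriv_deriv !hornerE opprB addrA subrK. Qed.

Lemma pintZD a b c p r : pint a b (c *: p + r) = c * pint a b p + pint a b r.
Proof.
rewrite -{1}(deriv_antideriv p) -{1}(deriv_antideriv r) -derivZ -derivD.
by rewrite pint_deriv /pint !(hornerD, hornerZ); ring.
Qed.

Lemma pint0 a b : pint a b 0 = 0.
Proof. by rewrite -(deriv0 R) pint_deriv !horner0 subrr. Qed.

Lemma pintZ a b c p : pint a b (c *: p) = c * pint a b p.
Proof. by rewrite -[c *: p]addr0 pintZD pint0 addr0. Qed.

Lemma pintD a b p r : pint a b (p + r) = pint a b p + pint a b r.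
Proof. by rewrite -[p in LHS]scale1r pintZD mul1r. Qed.

Lemma pintB a b p r : pint a b (p - r) = pint a b p - pint a b r.
Proof. by rewrite -scaleN1r pintD pintZ mulN1r. Qed.

End PolyIntegral.

Section PolyLebesgueIntegral.
Variable R : realType.
Implicit Types (a b C : R) (g : R -> R) (p s v : {poly R}).
Local Notation mu := (@lebesgue_measure R).

Lemma integrable_horner a b p : mu.-integrable `]a, b] (EFin \o horner p).
Proof.
apply: (@integrableS _ _ _ mu `[a, b]) => //.
  by apply: subset_itv; rewrite bnd_simp.
apply: continuous_compact_integrable; first exact: segment_compact.
by apply: continuous_subspaceT => x; exact: continuous_horner.
Qed.

Lemma intI_horner a b p : a < b -> intI a b (horner p) = pint a b p.
Proof.
move=> ab; rewrite /intI Rintegral_itv_obnd_cbnd; last exact: integrable_horner.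
have cp : continuous (horner p) by move=> x; exact: continuous_horner.
rewrite /Rintegral (@continuous_FTC2 _ _ (horner (antideriv p))) //=.
- exact: continuous_subspaceT.
- split; first by move=> x _; exact: derivable_horner.
  + by apply: cvg_at_right_filter; exact: continuous_horner.
  + by apply: cvg_at_left_filter; exact: continuous_horner.
- by move=> x _; rewrite -derivE deriv_antideriv.
Qed.

Lemma integrable_mul_horner a b C g v :
  measurable_fun `]a, b] g -> (forall t, a < t <= b -> `|g t| <= C) ->
  mu.-integrable `]a, b] (EFin \o (fun t => g t * v.[t])).
Proof.
move=> mg gC; have g_bounded : [bounded g x | x in `]a, b]].
  exists C; split; first exact: num_real.
  by move=> x Cx t /=; rewrite in_itv /= => /gC /le_trans; apply; exact: ltW.
exact: (@integrableMr _ _ _ mu _ _ _ _ mg g_bounded (integrable_horner a b v)).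
Qed.

Lemma poly_itv_eq0 a b p : a < b -> (forall x, a < x < b -> p.[x] = 0) -> p = 0.
Proof.
move=> ab p0; pose x i := a + (b - a) / i.+2%:R.
have x_itv i : a < x i < b.
  have : 0 < (b - a) / i.+2%:R < b - a.
    by rewrite divr_gt0 ?subr_gt0 // ltr_pdivrMr ?ltr0n // ltr_pMr ?ltr1n ?subr_gt0.
  rewrite /x; move: ((b - a) / _) => y; lra.
have x_inj : injective x.
  have ba_neq0 : b - a != 0 by rewrite subr_eq0 gt_eqF.
  by move=> i j /addrI /(mulfI ba_neq0) /invr_inj /eqP; rewrite eqr_nat => /eqP [].
apply: (@roots_geq_poly_eq0 _ p [seq x i | i <- iota 0 (size p)]).
- by apply/allP => _ /mapP[i _ ->]; rewrite rootE p0.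
- by rewrite map_inj_uniq ?iota_uniq.
- by rewrite size_map size_iota.
Qed.

Lemma pint_sqr_eq0 a b s : a < b -> pint a b (s * s) = 0 -> s = 0.
Proof.
move=> ab; set F := antideriv (s * s); rewrite /pint -/F => Fab.
have F_nondecr x y : a <= x -> x <= y -> y <= b -> F.[x] <= F.[y].
  apply: (@ger0_derive1_ndecr _ (horner F) a b).
  - by move=> z _; exact: derivable_horner.
  - by move=> z _; rewrite -derivE deriv_antideriv hornerM -expr2 sqr_ge0.
  - by apply: continuous_subspaceT => z; exact: continuous_horner.
have F_const : F - (F.[a])%:P = 0.
  apply: (poly_itv_eq0 ab) => x /andP[ax xb]; rewrite hornerD hornerN hornerC.
  have := F_nondecr a x (lexx a) (ltW ax) (ltW xb).
  have := F_nondecr x b (ltW ax) (ltW xb) (lexx b).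
  lra.
move/(congr1 deriv): F_const; rewrite derivB derivC subr0 deriv_antideriv deriv0.
by move/eqP; rewrite mulf_eq0 orbb => /eqP.
Qed.

Lemma intIB a b (F G : R -> R) :
  mu.-integrable `]a, b] (EFin \o F) -> mu.-integrable `]a, b] (EFin \o G) ->
  intI a b (fun t => F t - G t) = intI a b F - intI a b G.
Proof. by move=> iF iG; rewrite /intI RintegralB. Qed.

End PolyLebesgueIntegral.

Section Legendre.
Variable R : numFieldType.
Local Notation P n := (legendre R n : {poly R}).
Local Notation W := (1 - 'X^2 : {poly R}).
Implicit Types p r w : {poly R}.

Lemma legendre0 : P 0 = 1. Proof. by []. Qed.

Lemma legendre1 : P 1 = 'X. Proof. by []. Qed.

Lemma legendreSS n :
  P n.+2 = n.+2%:R^-1 *: (n.*2.+3%:R *: ('X * P n.+1) - n.+1%:R *: P n).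
Proof. by rewrite /legendre /=; case: legendre_pair. Qed.

Lemma natr_poly_neq0 n : n.+1%:R != 0 :> {poly R}.
Proof. by rewrite -polyC_natr polyC_eq0 pnatr_eq0. Qed.

Lemma legendre_rec n :
  n.+2%:R * P n.+2 = (n.+1 + n.+2)%:R * ('X * P n.+1) - n.+1%:R * P n.
Proof.
have inv_n2 : n.+2%:R^-1 *+ n.+2 = 1 :> R.
  by rewrite -(mulr_natr n.+2%:R^-1) mulVf ?pnatr_eq0.
rewrite legendreSS mulr_natl [(_ *: _) *+ _]scalerMnl inv_n2 scale1r !scaler_nat !mulr_natl.
by rewrite addSn !addnS addnn.
Qed.

Lemma deriv_natmul n p : (n%:R * p)^`() = n%:R * p^`() :> {poly R}.
Proof. by rewrite !mulr_natl derivMn. Qed.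

Lemma legendre_deriv_rec n :
  W * (P n)^`() = n.+1%:R * ('X * P n - P n.+1) /\
  W * (P n.+1)^`() = n.+1%:R * (P n - 'X * P n.+1).
Proof.
elim: n => [|n [IH0 IH1]]; first by rewrite legendre0 legendre1 derivC derivX; split; ring.
have rec := legendre_rec n.
have WdC : W * (n.+2%:R * (P n.+2)^`()) =
    (n.+1 + n.+2)%:R * (W * P n.+1 + 'X * (W * (P n.+1)^`()))
    - n.+1%:R * (W * (P n)^`()).
  by rewrite -deriv_natmul rec derivB !deriv_natmul derivM derivX; ring.
rewrite IH0 IH1 in WdC; split.
  by rewrite IH1 [in RHS]mulrBr rec; ring.
apply: (mulfI (natr_poly_neq0 n.+1)).
by rewrite mulrCA WdC [in RHS]mulrBr [n.+2%:R * ('X * _)]mulrCA rec; ring.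
Qed.

Lemma legendre_ode n : (W * (P n)^`())^`() = - (n * n.+1)%:R * P n.
Proof.
have [IH0 IH1] := legendre_deriv_rec n.
have W_neq0 : W != 0.
  by apply/eqP => /(congr1 (horner^~ 0)) /eqP; rewrite !hornerE expr0n /= subr0 oner_eq0.
apply: (mulfI W_neq0).
rewrite IH0 deriv_natmul derivB derivM derivX.
have -> : W * (n.+1%:R * (1 * P n + 'X * (P n)^`() - (P n.+1)^`())) =
    n.+1%:R * (W * P n + 'X * (W * (P n)^`()) - W * (P n.+1)^`()) by ring.
by rewrite IH0 IH1; ring.
Qed.

(* Lagrange's identity; the boundary term vanishes because [1 - x^2] does at [x = -1, 1]. *)
Lemma pint_legendre_op_sym p r :
  pint (-1) 1 ((W * p^`())^`() * r) = pint (-1) 1 ((W * r^`())^`() * p).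
Proof.
apply/eqP; rewrite -subr_eq0 -pintB.
have -> : (W * p^`())^`() * r - (W * r^`())^`() * p =
    (W * (p^`() * r - p * r^`()))^`() by rewrite !derivM !derivB !derivM; ring.
by rewrite pint_deriv !hornerE sqrrN expr1n subrr !mul0r subrr.
Qed.

Lemma legendre_orth n k : n != k -> pint (-1) 1 (P n * P k) = 0.
Proof.
move=> nk; have := pint_legendre_op_sym (P n) (P k).
rewrite !legendre_ode -!mulrA -!polyC_natr -!polyCN !mul_polyC !pintZ.
rewrite [P k * P n]mulrC => /eqP; rewrite -subr_eq0 -mulrBl mulf_eq0 => /orP[|/eqP//].
rewrite subr_eq0 eqr_opp eqr_nat => /eqP nk_eq.
by move: nk => /eqP; case; nia.
Qed.

Lemma size_legendre n : size (P n) = n.+1.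
Proof.
suff : size (P n) = n.+1 /\ size (P n.+1) = n.+2 by case.
elim: n => [|n [IH0 IH1]]; first by rewrite legendre0 legendre1 size_poly1 size_polyX.
split=> //; rewrite legendreSS size_scale ?invr_eq0 ?pnatr_eq0 //.
have sXP : size (n.*2.+3%:R *: ('X * P n.+1)) = n.+3.
  by rewrite size_scale ?pnatr_eq0 // mulrC size_mulX ?IH1 // -size_poly_eq0 IH1.
by rewrite size_polyDl sXP // size_polyN size_scale ?pnatr_eq0 // IH0.
Qed.

Lemma legendre_orth_lt n w : (size w <= n)%N -> pint (-1) 1 (P n * w) = 0.
Proof.
suff orth k : (k <= n)%N -> forall w, (size w <= k)%N -> pint (-1) 1 (P n * w) = 0.
  exact: orth.
elim: k => [|k IH] kn {}w sw.
  by move: sw; rewrite leqn0 size_poly_eq0 => /eqP ->; rewrite mulr0 pint0.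
have lcP : lead_coef (P k) != 0 by rewrite lead_coef_eq0 -size_poly_eq0 size_legendre.
set c := w`_k / lead_coef (P k).
have sw' : (size (w - c *: P k)%R <= k)%N.
  apply/leq_sizeP => j; rewrite coefB coefZ leq_eqVlt => /orP[/eqP <-|kj].
    have -> : (P k)`_k = lead_coef (P k) by rewrite lead_coefE size_legendre.
    by rewrite mulfVK ?subrr.
  rewrite !nth_default ?mulr0 ?subrr ?size_legendre //.
  exact: leq_trans sw kj.
rewrite -(subrK (c *: P k) w) mulrDr pintD -scalerAr pintZ legendre_orth ?mulr0 ?addr0.
  by apply: IH => //; exact: ltnW.
by rewrite neq_ltn kn orbT.
Qed.

Lemma root_legendreS_m1 n : root (P n + P n.+1) (-1).
Proof.
have [IH0 _] := legendre_deriv_rec n.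
move/(congr1 (horner^~ (-1))): IH0.
rewrite /= !hornerE hornerMn !hornerE sqrrN expr1n subrr mul0r.
move/esym/eqP; rewrite mulf_eq0 pnatr_eq0 /= mulN1r -opprD oppr_eq0.
by rewrite rootE hornerD.
Qed.

Lemma mul_radau_X1 q : radau R q * ('X + 1) = P q + P q.+1.
Proof.
have X1E : 'X + 1 = 'X - (-1)%:P :> {poly R} by rewrite polyCN opprK polyC1.
by rewrite /radau divpK // X1E dvdp_XsubCl root_legendreS_m1.
Qed.

Lemma size_radau q : size (radau R q) = q.+1.
Proof.
have sX1 : size ('X + 1 : {poly R}) = 2 by rewrite -polyC1 size_XaddC.
have sP : size (P q + P q.+1) = q.+2 by rewrite addrC size_polyDl !size_legendre.
have radau_neq0 : radau R q != 0.
  by apply: contra_eq_neq sP => r0; rewrite -mul_radau_X1 r0 mul0r size_poly0.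
move: sP; rewrite -mul_radau_X1 size_mul ?sX1 ?addn2 //=; first by case.
by rewrite -size_poly_eq0 sX1.
Qed.

Lemma radau_orth q w :
  (size w <= q)%N -> pint (-1) 1 (radau R q * ('X + 1) * w) = 0.
Proof.
move=> sw; rewrite mul_radau_X1 mulrDl pintD.
by rewrite !legendre_orth_lt ?addr0 // (leq_trans sw).
Qed.

End Legendre.

Section AffineTransport.
Variable R : numFieldType.
Variables (a b : R) (q : nat).
Implicit Types (r w : {poly R}).

Definition to_ref : {poly R} := (2 / (b - a)) *: ('X - a%:P) - 1.

Definition radau_poly_on : {poly R} := radau R q \Po to_ref.

Lemma horner_to_ref t : to_ref.[t] = 2 * (t - a) / (b - a) - 1.
Proof. by rewrite /to_ref hornerD hornerN hornerZ hornerXsubC hornerC mulrAC. Qed.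

Lemma horner_radau_poly_on t : radau_poly_on.[t] = radau_on q a b t.
Proof. by rewrite horner_comp horner_to_ref. Qed.

Hypothesis ba_neq0 : b - a != 0.

Definition from_ref : {poly R} := ((b - a) / 2) *: ('X + 1) + a%:P.

Lemma scale_ref_inv : (b - a) / 2 * (2 / (b - a)) = 1.
Proof. by rewrite mulrA divfK ?pnatr_eq0 // divff. Qed.

Lemma size_to_ref : size to_ref = 2.
Proof.
have c_neq0 : 2 / (b - a) != 0 by rewrite mulf_neq0 ?invr_eq0 ?pnatr_eq0.
by rewrite /to_ref size_polyDl size_scale ?size_XsubC // size_polyN size_poly1.
Qed.

Lemma size_from_ref : size from_ref = 2.
Proof.
have c_neq0 : (b - a) / 2 != 0 by rewrite mulf_neq0 ?invr_eq0 ?pnatr_eq0.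
rewrite /from_ref size_polyDl size_scale // -polyC1 size_XaddC //.
exact: leq_ltn_trans (size_polyC_leq1 a) _.
Qed.

Lemma from_refK : from_ref \Po to_ref = 'X.
Proof.
rewrite /from_ref comp_polyD comp_polyZ comp_polyD comp_polyX -polyC1 !comp_polyC.
by rewrite polyC1 subrK scalerA scale_ref_inv scale1r subrK.
Qed.

Lemma X1_to_ref : ('X + 1) \Po to_ref = (2 / (b - a)) *: ('X - a%:P).
Proof. by rewrite comp_polyD comp_polyX -polyC1 comp_polyC polyC1 subrK. Qed.

Lemma pint_to_ref r : pint a b (r \Po to_ref) = (b - a) / 2 * pint (-1) 1 r.
Proof.
have dL : to_ref^`() = (2 / (b - a))%:P.
  by rewrite /to_ref derivB derivZ derivXsubC -polyC1 derivC subr0 alg_polyC.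
have rLE : r \Po to_ref = ((b - a) / 2) *: (antideriv r \Po to_ref)^`().
  by rewrite deriv_comp deriv_antideriv dL [_ * _%:P]mulrC mul_polyC scalerA scale_ref_inv scale1r.
rewrite rLE pintZ pint_deriv !horner_comp !horner_to_ref /pint.
by congr (_ * (_.[_] - _.[_])); field.
Qed.

Lemma size_radau_poly_on : size radau_poly_on = q.+1.
Proof. by rewrite size_comp_poly2 ?size_to_ref ?size_radau. Qed.

Lemma radau_poly_on_orth w :
  (size w <= q)%N -> pint a b (radau_poly_on * ('X - a%:P) * w) = 0.
Proof.
move=> sw; set w' := w \Po from_ref.
have wE : w = w' \Po to_ref by rewrite /w' -comp_polyA from_refK comp_polyXr.
have XaE : 'X - a%:P = ((b - a) / 2) *: (('X + 1) \Po to_ref).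
  by rewrite X1_to_ref scalerA scale_ref_inv scale1r.
rewrite XaE wE -scalerAr -scalerAl -!comp_polyM pintZ pint_to_ref radau_orth ?mulr0 //.
by rewrite size_comp_poly2 ?size_from_ref.
Qed.

End AffineTransport.

Section RadauSpace.
Variable R : realType.
Variables (a b : R) (q : nat).
Hypothesis ab : a < b.
Implicit Types (p r w : {poly R}).

Definition orth_XsubC_polys r :=
  forall w, (size w <= q)%N -> pint a b (r * ('X - a%:P) * w) = 0.

(* A root at [a] makes [r] itself of the form [('X - a) w], so [r] is orthogonal to itself. *)
Lemma orth_XsubC_polys_root_eq0 r :
  (size r <= q.+1)%N -> orth_XsubC_polys r -> r.[a] = 0 -> r = 0.
Proof.
move=> sr r_orth ra.
have /dvdpP[w rE] : ('X - a%:P) %| r by rewrite dvdp_XsubCl rootE ra.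
have sw : (size w <= q)%N.
  have [->|w_neq0] := eqVneq w 0; first by rewrite size_poly0.
  by move: sr; rewrite rE size_mul ?polyXsubC_eq0 // size_XsubC addn2.
apply: (pint_sqr_eq0 ab); rewrite {2}rE [w * _]mulrC mulrA.
exact: r_orth.
Qed.

Lemma orth_XsubC_polys_radau p :
  (size p <= q.+1)%N -> orth_XsubC_polys p -> exists c, p = c *: radau_poly_on a b q.
Proof.
move=> sp p_orth; set rho := radau_poly_on a b q.
have ba_neq0 : b - a != 0 by rewrite subr_eq0 gt_eqF.
have s_rho : size rho = q.+1 by exact: size_radau_poly_on.
have rho_orth : orth_XsubC_polys rho by move=> w; exact: radau_poly_on_orth.
have rho_a : rho.[a] != 0.
  apply/eqP => /(orth_XsubC_polys_root_eq0 (eq_leq s_rho) rho_orth) /eqP.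
  by rewrite -size_poly_eq0 s_rho.
exists (p.[a] / rho.[a]); apply/eqP; rewrite -subr_eq0; apply/eqP.
apply: orth_XsubC_polys_root_eq0.
- rewrite (leq_trans (size_polyD _ _)) // geq_max sp size_polyN.
  by rewrite (leq_trans (size_scale_leq _ _)) ?s_rho.
- by move=> w sw; rewrite !mulrBl -!scalerAl pintB pintZ p_orth // rho_orth // mulr0 subr0.
- by rewrite hornerD hornerN hornerZ mulfVK // subrr.
Qed.

End RadauSpace.

Lemma galerkin_residual_orth (R : realType) (a b C : R) (q : nat)
    (d p : {poly R}) (g : R -> R) :
  a < b -> measurable_fun `]a, b] g -> (forall t, a < t <= b -> `|g t| <= C) ->
  (forall v : {poly R}, (size v <= q.+1)%N -> v.[a] = 0 ->
     intI a b (fun t => d.[t] * v.[t]) = intI a b (fun t => g t * v.[t])) ->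
  (forall v : {poly R}, (size v <= q.+1)%N ->
     intI a b (fun t => (d.[t] - g t - p.[t]) * v.[t]) = 0) ->
  orth_XsubC_polys a b q p.
Proof.
move=> ab mg gC galerkin proj.
suff pv_orth (v : {poly R}) : (size v <= q.+1)%N -> v.[a] = 0 -> pint a b (p * v) = 0.
  move=> w sw; rewrite -mulrA pv_orth ?hornerM ?hornerXsubC ?subrr ?mul0r //.
  by rewrite (leq_trans (size_polyMleq _ _)) ?size_XsubC.
move=> sv va; have hornerMv (r : {poly R}) : (fun t => r.[t] * v.[t]) = horner (r * v).
  by apply: funext => t; rewrite hornerM.
have resE : (fun t => (d.[t] - g t - p.[t]) * v.[t]) =
    fun t => ((d - p) * v).[t] - g t * v.[t].
  by apply: funext => t; rewrite hornerM hornerD hornerN; ring.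
have := proj v sv; rewrite resE intIB ?integrable_horner ?(integrable_mul_horner v mg gC) //.
rewrite intI_horner // mulrBl pintB -intI_horner // -hornerMv galerkin //.
by rewrite addrAC subrr add0r => /eqP; rewrite oppr_eq0 => /eqP.
Qed.

Lemma increasing_seq_le (R : numDomainType) (t : nat -> R) (m k l : nat) :
  (forall j, (j < m)%N -> t j < t j.+1) -> (k <= l <= m)%N -> t k <= t l.
Proof.
move=> t_incr /andP[]; elim: l => [|l IH]; first by rewrite leqn0 => /eqP ->.
rewrite leq_eqVlt => /orP[/eqP -> //|kl] lm.
exact: le_trans (IH kl (ltnW lm)) (ltW (t_incr l lm)).
Qed.

Lemma mx_entry_normr_le (R : realType) (m n : nat) (x : 'M[R]_(m, n)) i j :
  `|x i j| <= `|x|.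
Proof. by rewrite -[`|x|]/(mx_norm x) mx_normrE; exact: (le_bigmax _ _ (i, j)). Qed.

(* Component [i] of [f u t] is [f u t ord0 i]; [tp i j] is t_{ij}, [Pol i j] is
   U_i on I_{ij}, and [u0] is u(0). *)
Theorem lemma6p11 (R : realType) (N : nat) (T : R)
    (f : 'rV[R]_N -> R -> 'rV[R]_N) (u0 : 'rV[R]_N)
    (M : 'I_N -> nat) (tp : 'I_N -> nat -> R) (q : 'I_N -> nat -> nat)
    (Pol : 'I_N -> nat -> {poly R}) (U : 'I_N -> R -> R) :
  0 < T ->
  (exists C : R, forall u t, 0 <= t <= T -> `|f u t| <= C) ->
  (exists L : R, forall u v t, 0 <= t <= T -> `|f u t - f v t| <= L * `|u - v|) ->
  (forall i, (0 < M i)%N) ->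
  (forall i, tp i 0%N = 0) ->
  (forall i, tp i (M i) = T) ->
  (forall i j, (j < M i)%N -> tp i j < tp i j.+1) ->
  (forall i j, (0 < j <= M i)%N -> (1 <= q i j)%N) ->
  (forall i j, (0 < j <= M i)%N -> (size (Pol i j) <= (q i j).+1)%N) ->
  (forall i j, (0 < j <= M i)%N ->
     forall t, tp i j.-1 < t <= tp i j -> U i t = (Pol i j).[t]) ->
  (forall i, measurable_fun `]0, T] (fun t => f (\row_k U k t) t ord0 i)) ->
  (forall i j, (0 < j <= M i)%N ->
     forall v : {poly R}, (size v <= (q i j).+1)%N ->
       ((Pol i j).[tp i j.-1]
          - (if j == 1%N then u0 ord0 i else (Pol i j.-1).[tp i j.-1]))
         * v.[tp i j.-1]
       + intI (tp i j.-1) (tp i j) (fun t => ((Pol i j)^`()).[t] * v.[t])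
       = intI (tp i j.-1) (tp i j)
           (fun t => f (\row_k U k t) t ord0 i * v.[t])) ->
  forall i j, (0 < j <= M i)%N ->
    forall p : {poly R}, (size p <= (q i j).+1)%N ->
      (forall v : {poly R}, (size v <= (q i j).+1)%N ->
         intI (tp i j.-1) (tp i j)
           (fun t => (((Pol i j)^`()).[t] - f (\row_k U k t) t ord0 i - p.[t])
                     * v.[t]) = 0) ->
      exists c : R, forall t, tp i j.-1 < t <= tp i j ->
        p.[t] = c * radau_on (q i j) (tp i j.-1) (tp i j) t.
Proof.
move=> _ [C f_bounded] _ _ tp0 tpM tp_incr _ _ _ f_meas mdG i j j_range p size_p p_proj.
have /andP[j_gt0 j_le] := j_range.
have ab : tp i j.-1 < tp i j by rewrite -{2}(prednK j_gt0) tp_incr // prednK.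
have a_ge0 : 0 <= tp i j.-1.
  by rewrite -(tp0 i); apply: (increasing_seq_le (tp_incr i)); rewrite (leq_trans (leq_pred j)).
have b_leT : tp i j <= T.
  by rewrite -(tpM i); apply: (increasing_seq_le (tp_incr i)); rewrite j_le leqnn.
pose g t := f (\row_k U k t) t ord0 i.
have g_bounded t : tp i j.-1 < t <= tp i j -> `|g t| <= C.
  move=> /andP[a_t t_b]; apply: le_trans (mx_entry_normr_le _ _ _) (f_bounded _ _ _).
  by rewrite (le_trans a_ge0 (ltW a_t)) (le_trans t_b b_leT).
have g_meas : measurable_fun `]tp i j.-1, tp i j] g.
  by apply: measurable_funS (f_meas i) => //; apply: subset_itv; rewrite bnd_simp.
have p_orth : orth_XsubC_polys (tp i j.-1) (tp i j) (q i j) p.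
  apply: (galerkin_residual_orth ab g_meas g_bounded _ p_proj) => v sv va.
  by have := mdG i j j_range v sv; rewrite va mulr0 add0r.
have [c ->] := orth_XsubC_polys_radau ab size_p p_orth.
by exists c => t _; rewrite hornerZ horner_radau_poly_on.
Qed.
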